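(* Let $m\ge 1$ and let $X\subset\mathbb{N}_0^m$ be a finite lower set of $(\mathbb{N}_0^m,\preceq)$ with $|X|=p$. Then the $p\times p$ generalized Vandermonde matrix $V(X,X)$, whose rows are indexed by the points $\boldsymbol{x}\in X$ (viewed as points of $\mathbb{R}^m$) and whose columns are indexed by the exponents $\boldsymbol{\alpha}\in X$, with entries $\boldsymbol{x}^{\boldsymbol{\alpha}}$, is invertible.
   Context: $\preceq$ is the componentwise (product) order on $\mathbb{N}_0^m$: $\boldsymbol{y}\preceq\boldsymbol{x}$ iff $y_j\le x_j$ for all $j$. A lower set is a nonempty subset $I\subseteq\mathbb{N}_0^m$ such that $\boldsymbol{x}\in I$ and $\boldsymbol{y}\preceq\boldsymbol{x}$ imply $\boldsymbol{y}\in I$. For $\boldsymbol{x}\in\mathbb{R}^m$ and $\boldsymbol{\alpha}\in\mathbb{N}_0^m$, $\boldsymbol{x}^{\boldsymbol{\alpha}}=x_1^{\alpha_1}\cdots x_m^{\alpha_m}$ with the convention $0^0=1$. *)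

From HB Require Import structures.
From mathcomp Require Import all_boot all_order all_algebra.
From mathcomp Require Import reals.
Set Implicit Arguments. Unset Strict Implicit. Unset Printing Implicit Defensive.
Import Order.TTheory GRing.Theory Num.Theory.
Local Open Scope ring_scope.

Notation multi m := {ffun 'I_m -> nat}.

Definition mle (m : nat) (y x : multi m) : Prop := forall k : 'I_m, (y k <= x k)%N.

(* A lower set (nonempty, downward closed), given as a duplicate-free list. *)
Definition lower_set (m : nat) (X : seq (multi m)) : Prop :=
  X != [::] /\ forall x y : multi m, x \in X -> mle y x -> y \in X.

(* x^alpha for x in N_0^m viewed in R^m; x ^+ 0 = 1 gives 0^0 = 1. *)
Definition mpow (R : realType) (m : nat) (x alpha : multi m) : R :=
  \prod_(k < m) ((x k)%:R ^+ alpha k).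

(* Generalized Vandermonde V(X,X): rows indexed by points, columns by exponents,
   both enumerated in the order of the list X. *)
Definition gvander (R : realType) (m : nat) (X : seq (multi m)) : 'M[R]_(size X) :=
  \matrix_(i < size X, j < size X)
     mpow R (nth [ffun=> 0%N] X i) (nth [ffun=> 0%N] X j).

(* If [u *m V(X,X) = 0], the weights [u] annihilate every polynomial whose
   monomials have exponents in [X].  Take [b] of maximal total degree among the
   points where [u] is nonzero.  The product of falling factorials
   [prod_k x_k (x_k - 1) ... (x_k - b_k + 1)] only involves exponents below [b],
   hence in the lower set [X]; it vanishes at every other point of total degree
   at most that of [b], but not at [b] itself.  So [u_b = 0], a contradiction. *)
From HB Require Import structures.
From mathcomp Require Import all_boot all_order all_algebra.
From mathcomp Require Import reals.
Set Implicit Arguments. Unset Strict Implicit. Unset Printing Implicit Defensive.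
Import Order.TTheory GRing.Theory Num.Theory.
Local Open Scope ring_scope.

Definition mdeg (m : nat) (x : multi m) : nat := (\sum_(k < m) x k)%N.

Lemma mdeg_lt (m : nat) (b x : multi m) :
  mle b x -> b != x -> (mdeg b < mdeg x)%N.
Proof.
move=> le_bx neq_bx.
have /leqifP : (mdeg b <= mdeg x ?= iff [forall k, b k == x k])%N.
  by apply: leqif_sum => k _; apply: leqif_eq.
case: ifP => // /forallP eq_bx _; case/eqP: neq_bx.
by apply/ffunP => k; apply/eqP.
Qed.

Definition falling_poly (R : nzRingType) (n : nat) : {poly R} :=
  \prod_(i < n) ('X - i%:R%:P).

Lemma size_falling_poly (R : nzRingType) (n : nat) :
  size (falling_poly R n) = n.+1.
Proof. by rewrite size_prod_XsubC [index_enum _]unlock -enumT -cardT card_ord. Qed.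

Lemma falling_poly_root (R : comNzRingType) (n t : nat) :
  (t < n)%N -> root (falling_poly R n) t%:R.
Proof.
move=> lt_tn; apply/rootP.
by rewrite horner_prod (bigD1 (Ordinal lt_tn)) //= hornerXsubC subrr mul0r.
Qed.

Lemma falling_poly_neq0 (R : numDomainType) (n : nat) :
  (falling_poly R n).[n%:R] != 0.
Proof.
rewrite horner_prod; apply/prodf_neq0 => i _.
by rewrite hornerXsubC subr_eq0 eqr_nat neq_ltn ltn_ord orbT.
Qed.

Section FallingProduct.

Variables (R : realType) (m : nat).

Definition falling_prod (b x : multi m) : R :=
  \prod_(k < m) (falling_poly R (b k)).[(x k)%:R].

Lemma falling_prod_expand (b x : multi m) (N : nat) :
  (forall k, b k < N)%N ->
  falling_prod b x = \sum_(f : {ffun 'I_m -> 'I_N})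
     (\prod_(k < m) (falling_poly R (b k))`_(f k)) * mpow R x [ffun k => val (f k)].
Proof.
move=> lt_bN; rewrite /falling_prod.
under eq_bigr => k _ do rewrite (@horner_coef_wide _ N) ?size_falling_poly ?lt_bN //.
rewrite bigA_distr_bigA; apply: eq_bigr => f _.
by rewrite /mpow -big_split; apply: eq_bigr => k _; rewrite ffunE.
Qed.

(* [falling_prod b] is a combination of the monomials with exponents below [b]. *)
Lemma falling_prod_annihilated (I : finType) (w : I -> R) (P : I -> multi m) b :
  (forall a, mle a b -> \sum_i w i * mpow R (P i) a = 0) ->
  \sum_i w i * falling_prod b (P i) = 0.
Proof.
move=> w_mpow0; have lt_b_deg k : (b k < (mdeg b).+1)%N.
  by rewrite ltnS /mdeg (bigD1 k) //= leq_addr.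
under eq_bigr => i _ do rewrite (falling_prod_expand _ lt_b_deg) mulr_sumr.
rewrite exchange_big; apply: big1 => f _.
under eq_bigr => i _ do rewrite mulrCA.
rewrite -mulr_sumr.
have [/forallP le_fb | /forallPn [k gt_fb]] := boolP [forall k, (f k <= b k)%N].
  by rewrite w_mpow0 ?mulr0 // => k; rewrite ffunE le_fb.
by rewrite (bigD1 k) //= nth_default ?mul0r // size_falling_poly ltnNge gt_fb.
Qed.

Lemma falling_prod_eq0 (b x : multi m) :
  (mdeg x <= mdeg b)%N -> x != b -> falling_prod b x = 0.
Proof.
move=> le_deg neq_xb.
have [/forallP le_bx | /forallPn [k lt_xb]] := boolP [forall k, (b k <= x k)%N].
  by move: le_deg; rewrite leqNgt mdeg_lt // eq_sym.
apply/eqP/prodf_eq0; exists k => //.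
by rewrite -rootE falling_poly_root // ltnNge.
Qed.

Lemma falling_prod_neq0 (b : multi m) : falling_prod b b != 0.
Proof. by apply/prodf_neq0 => k _; apply: falling_poly_neq0. Qed.

End FallingProduct.

Section LowerSetVandermonde.

Variables (R : realType) (m : nat) (X : seq (multi m)).

Local Notation x0 := ([ffun=> 0%N] : multi m).

Lemma gvander_kernel_mpow (u : 'rV[R]_(size X)) (a : multi m) :
  u *m gvander R X = 0 -> a \in X ->
  \sum_i u 0 i * mpow R (nth x0 X i) a = 0.
Proof.
move=> uV0 aX; have ltaX : (index a X < size X)%N by rewrite index_mem.
transitivity ((u *m gvander R X) 0 (Ordinal ltaX)); last by rewrite uV0 mxE.
by rewrite mxE; apply: eq_bigr => i _; rewrite mxE /= nth_index.
Qed.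

Lemma gvander_kernel_eq0 (u : 'rV[R]_(size X)) :
  uniq X -> lower_set X -> u *m gvander R X = 0 -> u = 0.
Proof.
move=> uniqX [_ lowX] uV0; apply/rowP => j; rewrite mxE.
apply/eqP; apply: contraT => uj_neq0.
have [i0 ui0_neq0 max_i0] := @arg_maxnP _ j (fun i => u 0 i != 0)
  (fun i => mdeg (nth x0 X i)) uj_neq0.
set b := nth x0 X i0.
have bX : b \in X by apply: mem_nth.
have := falling_prod_annihilated (w := u 0) (P := nth x0 X) (b := b)
  (fun a le_ab => gvander_kernel_mpow uV0 (lowX b a bX le_ab)).
rewrite (bigD1 i0) //= big1 ?addr0 => [/eqP|i neq_ii0].
  by rewrite mulf_eq0 (negbTE ui0_neq0) (negbTE (falling_prod_neq0 _ _)).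
have [-> | ui_neq0] := eqVneq (u 0 i) 0; first by rewrite mul0r.
rewrite falling_prod_eq0 ?mulr0 //; first exact: max_i0.
by rewrite /b nth_uniq.
Qed.

End LowerSetVandermonde.

Theorem proposition1 (R : realType) (m : nat) (X : seq {ffun 'I_m -> nat}) :
  (0 < m)%N -> uniq X -> lower_set X -> gvander R X \in unitmx.
Proof.
move=> _ uniqX lowX; rewrite -row_free_unit; apply: inj_row_free => u.
exact: gvander_kernel_eq0.
Qed.
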